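(* Let $k$ be a field, $(X,\leq)$ a locally finite preordered set and $C=IC(X)$. Then every indecomposable injective right $C$-comodule is isomorphic to $E_x$ for some $x\in X$.
   Context: $(X,\leq)$ is a reflexive transitive relation with all intervals $[x,y]$ finite. $IC(X)$ has $k$-basis $\{e_{x,y}\mid x\leq y\}$, $\Delta(e_{x,y})=\sum_{x\leq z\leq y}e_{x,z}\otimes e_{z,y}$, $\varepsilon(e_{x,y})=\delta_{x,y}$. For $x\in X$, $E_x=\operatorname{span}\{e_{x,y}\mid y\in X,\ x\leq y\}$, a right $C$-subcomodule of $C$. *)

From HB Require Import structures.
From mathcomp Require Import all_boot all_order all_algebra.

Set Implicit Arguments.
Unset Strict Implicit.
Unset Printing Implicit Defensive.

Import GRing.Theory.
Local Open Scope ring_scope.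

(* Incidence coalgebra C = IC(X) of a preordered set (X, le) over a field k.
   C has k-basis e_{x,y} (x <= y).  For a k-vector space M we identify
   M (x) C with the finitely supported M-valued families indexed by the
   basis {(a,b) | a <= b}: t = sum_{a<=b} t(a,b) (x) e_{a,b}.
   A right coaction rho : M -> M (x) C is thus given by
   rho : M -> X -> X -> M, where rho m a b is the coefficient of e_{a,b}. *)

Section IncidenceComodules.
Variables (k : fieldType) (X : eqType) (le : rel X).

Definition preorder_rel : Prop := reflexive le /\ transitive le.

Definition locally_finite : Prop :=
  forall x y, exists s : seq X, forall z, le x z -> le z y -> z \in s.

(* (M, rho) is a right C-comodule:
   - rho linear,
   - rho m lies in M (x) C: supported on {(a,b) | a <= b}, finitely,
   - counit: (id (x) eps) (rho m) = sum_a rho m a a = m,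
   - coassociativity: (rho (x) id) rho = (id (x) Delta) rho, compared on
     the basis e_{a,b} (x) e_{c,d} (a<=b, c<=d) of C (x) C, where
     Delta(e_{a,d}) = sum_{a<=b<=d} e_{a,b} (x) e_{b,d}. *)
Definition is_right_comodule (M : lmodType k) (rho : M -> X -> X -> M) : Prop :=
  [/\ (forall (c : k) (m n : M) a b, rho (c *: m + n) a b = c *: rho m a b + rho n a b),
      (forall m a b, rho m a b != 0 -> le a b),
      (forall m, exists s : seq (X * X), forall a b, rho m a b != 0 -> (a, b) \in s),
      (forall m, exists s : seq X,
          [/\ uniq s, (forall a, rho m a a != 0 -> a \in s) & m = \sum_(a <- s) rho m a a]) &
      (forall m a b c d, le a b -> le c d ->
          rho (rho m c d) a b = if b == c then rho m a d else 0)].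

Definition comod_morph (M N : lmodType k) (rhoM : M -> X -> X -> M)
    (rhoN : N -> X -> X -> N) (f : M -> N) : Prop :=
  (forall (c : k) (m n : M), f (c *: m + n) = c *: f m + f n) /\
  (forall m a b, f (rhoM m a b) = rhoN (f m) a b).

Definition injective_comodule (E : lmodType k) (rhoE : E -> X -> X -> E) : Prop :=
  forall (A B : lmodType k) (rhoA : A -> X -> X -> A) (rhoB : B -> X -> X -> B),
    is_right_comodule rhoA -> is_right_comodule rhoB ->
    forall (f : A -> B) (g : A -> E),
      comod_morph rhoA rhoB f -> injective f -> comod_morph rhoA rhoE g ->
      exists h : B -> E, comod_morph rhoB rhoE h /\ (forall x, h (f x) = g x).

Definition subcomodule (M : lmodType k) (rho : M -> X -> X -> M) (N : M -> Prop) : Prop :=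
  [/\ N 0, (forall (c : k) m n, N m -> N n -> N (c *: m + n)) &
      (forall m a b, N m -> N (rho m a b))].

Definition indecomposable_comodule (M : lmodType k) (rho : M -> X -> X -> M) : Prop :=
  (exists m : M, m != 0) /\
  forall N1 N2 : M -> Prop, subcomodule rho N1 -> subcomodule rho N2 ->
    (forall m, exists m1 m2, [/\ N1 m1, N2 m2 & m = m1 + m2]) ->
    (forall m, N1 m -> N2 m -> m = 0) ->
    (forall m, N1 m -> m = 0) \/ (forall m, N2 m -> m = 0).

(* Elements of C are represented by their coefficient functions c u v
   (coefficient of e_{u,v}).  E_x = span{e_{x,y} | x <= y}: *)
Definition in_Ex (x : X) (f : X -> X -> k) : Prop :=
  exists s : seq X, forall u v, f u v != 0 -> [&& u == x, le x v & v \in s].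

(* the right coaction Delta of C, coefficient of (_) (x) e_{a,b}:
   Delta(sum c_{u,w} e_{u,w}) = sum_{u<=a<=b} c_{u,b} e_{u,a} (x) e_{a,b} *)
Definition coaction_C (c : X -> X -> k) (a b : X) : X -> X -> k :=
  fun u v => if [&& v == a, le u a & le a b] then c u b else 0.

(* (M, rho) is isomorphic, as a right C-comodule, to E_x: a comodule map
   phi : M -> C that is injective with image exactly E_x. *)
Definition iso_to_Ex (M : lmodType k) (rho : M -> X -> X -> M) (x : X) : Prop :=
  exists phi : M -> X -> X -> k,
    [/\ (forall (c : k) (m n : M) u v, phi (c *: m + n) u v = c * phi m u v + phi n u v),
        injective phi,
        (forall m, in_Ex x (phi m)),
        (forall f, in_Ex x f -> exists m, phi m = f) &
        (forall m a b, phi (rho m a b) = coaction_C (phi m) a b)].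

End IncidenceComodules.

From HB Require Import structures.
From mathcomp Require Import all_boot all_order all_algebra.
From mathcomp Require Import boolp classical_sets functions.

Set Implicit Arguments.
Unset Strict Implicit.
Unset Printing Implicit Defensive.

Import GRing.Theory.
Local Open Scope ring_scope.

(* A nonzero comodule contains a vector [s] that behaves like the basis vector
   e_{x,x} of C: take [s = rho m x a] with [x] minimal among the [c] such that
   [rho m c a != 0].  Then e_{x,c} |-> [rho s c x] is a comodule map from
   C_x = span{e_{x,c} | c ~ x}, the subcomodule of E_x generated by e_{x,x},
   and injectivity of E extends it to [h : E_x -> E] with [h e_{x,x} = s].
   A linear functional [lam] with [lam s = 1] induces the comodule map
   [r : E -> E_x], m |-> sum_v lam (rho m x v) e_{x,v}, and [r \o h = id]
   because E_x is cogenerated by e_{x,x}.  So [h \o r] is an idempotent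
   comodule endomorphism of the indecomposable E that does not vanish on [s],
   hence [h \o r = id] and [r] is an isomorphism onto E_x. *)

Section LinearMap.
Variables (R : pzRingType) (U V : lmodType R) (f : U -> V).
Hypothesis f_lin : linear f.

Let lf := f.
HB.instance Definition _ := GRing.isLinear.Build R U V *:%R lf f_lin.

Lemma lin0 : f 0 = 0. Proof. exact: (raddf0 lf). Qed.
Lemma linB : {morph f : u v / u - v}. Proof. exact: (raddfB lf). Qed.
Lemma linZ c : {morph f : u / c *: u}.
Proof. by move=> u; rewrite -[c *: u]addr0 f_lin lin0 addr0. Qed.
Lemma lin_sum (I : Type) (r : seq I) (F : I -> U) :
  f (\sum_(i <- r) F i) = \sum_(i <- r) f (F i).
Proof. exact: (raddf_sum lf). Qed.
End LinearMap.

Lemma big_pred1_seq (V : nmodType) (I : eqType) (r : seq I) (a : I) (F : I -> V) :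
  uniq r -> \sum_(c <- r) (if c == a then F c else 0) = if a \in r then F a else 0.
Proof.
elim: r => [|c r IHr] /=; first by rewrite big_nil.
case/andP=> cNr r_uniq; rewrite big_cons IHr // in_cons.
have [<- | ca] := eqVneq c a; first by rewrite (negbTE cNr) addr0.
by rewrite add0r.
Qed.

Section FinitelySupported.
Variables (k : fieldType) (X : eqType) (P : pred X).

Definition finsupp_pred : {pred X -> k^o} :=
  fun f => `[< exists s : seq X, forall v, f v != 0 -> P v /\ v \in s >].

Lemma finsupp_submod_closed : submod_closed finsupp_pred.
Proof.
split=> [|c f g]; rewrite !inE; first by exists [::] => v; rewrite eqxx.
move=> [s1 fs1] [s2 gs2]; exists (s1 ++ s2) => v; rewrite mem_cat.
have -> : (c *: f + g) v = c * f v + g v by [].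
have [f0 | /fs1[Pv vs1] _] := eqVneq (f v) 0; last by rewrite vs1.
by rewrite f0 mulr0 add0r => /gs2[Pv ->]; rewrite orbT.
Qed.

HB.instance Definition _ :=
  GRing.isSubmodClosed.Build k (X -> k^o) finsupp_pred finsupp_submod_closed.

Record finsupp := Finsupp {
  finsupp_val :> X -> k^o;
  finsuppP : finsupp_val \in finsupp_pred }.
HB.instance Definition _ := [isSub for finsupp_val].
HB.instance Definition _ := [Choice of finsupp by <:].
HB.instance Definition _ := [SubChoice_isSubLmodule of finsupp by <:].

Lemma finsupp_support (f : finsupp) :
  exists s : seq X, forall v, f v != 0 -> P v /\ v \in s.
Proof. by have := finsuppP f; rewrite inE. Qed.

Lemma finsupp_dom (f : finsupp) v : f v != 0 -> P v.
Proof. by have [s /(_ v)] := finsupp_support f => fs /fs[]. Qed.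

Lemma finsupp_ext (f g : finsupp) : f =1 g -> f = g.
Proof. by move=> fg; apply: val_inj; apply/funext. Qed.

Lemma finsupp_linE c (f g : finsupp) v : (c *: f + g) v = c * f v + g v.
Proof. by []. Qed.

Lemma finsuppZE c (f : finsupp) v : (c *: f) v = c * f v.
Proof. by []. Qed.

Lemma finsupp_sumE (I : Type) (r : seq I) (F : I -> finsupp) v :
  (\sum_(i <- r) F i) v = \sum_(i <- r) F i v.
Proof. by elim: r => [|i r IHr]; rewrite ?big_nil ?big_cons // -IHr. Qed.

Lemma finsupp_delta_subproof y : P y -> (fun v => (v == y)%:R : k^o) \in finsupp_pred.
Proof.
move=> Py; rewrite inE; exists [:: y] => v; rewrite mem_seq1.
by have [-> | ] := eqVneq v y; rewrite ?eqxx.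
Qed.

Definition finsupp_delta y (Py : P y) : finsupp := Finsupp (finsupp_delta_subproof Py).

End FinitelySupported.

Section RowComodule.
Variables (k : fieldType) (X : eqType) (le : rel X) (x : X) (P : pred X).
Hypotheses (le_refl : reflexive le) (le_trans : transitive le).
Hypothesis le_lf : locally_finite le.
Hypotheses (P_ge : forall v, P v -> le x v)
  (P_down : forall a b, P b -> le x a -> le a b -> P a).

Local Notation M := (finsupp k P).

(* For [P] down-closed in the up-set of [x], [finsupp k P] is the span of the
   e_{x,v} with [P v] (a vector being its family of coefficients), and
   [row_coact] is the restriction of [coaction_C] to it. *)
Definition row_coactf (m : M) a b : X -> k^o :=
  fun v => if [&& v == a, le x a & le a b] then m b else 0.

Lemma row_coactf_finsupp m a b : row_coactf m a b \in finsupp_pred P.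
Proof.
rewrite inE; exists [:: a] => v; rewrite /row_coactf mem_seq1.
case: and3P => [[/eqP-> xa ab] mb | _]; last by rewrite eqxx.
by split=> //; exact: P_down (finsupp_dom mb) xa ab.
Qed.

Definition row_coact m a b : M := Finsupp (row_coactf_finsupp m a b).

Lemma row_coactE m a b v :
  row_coact m a b v = if [&& v == a, le x a & le a b] then m b else 0.
Proof. by []. Qed.

Lemma interval_pairs (s : seq X) : exists S : seq (X * X),
  forall a b, b \in s -> le x a -> le a b -> (a, b) \in S.
Proof.
elim: s => [|b s [S HS]]; first by exists [::].
have [I HI] := le_lf x b.
exists ([seq (a, b) | a <- I] ++ S) => a b'; rewrite in_cons mem_cat.
case/orP=> [/eqP-> xa ab | b's xa ab']; last by rewrite HS ?orbT.
by rewrite map_f ?HI.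
Qed.

Lemma row_counit m : exists s : seq X,
  [/\ uniq s, (forall a, row_coact m a a != 0 -> a \in s)
    & m = \sum_(a <- s) row_coact m a a].
Proof.
have [s ms] := finsupp_support m.
have ms' v : m v != 0 -> v \in undup s by rewrite mem_undup => /ms[].
exists (undup s); split=> [||]; first exact: undup_uniq.
  move=> a; apply: contraNT => aNs; apply/eqP/finsupp_ext => v.
  rewrite row_coactE; case: and3P => [[/eqP-> _ _] | //].
  by apply/eqP; apply: contraNT aNs; exact: ms'.
apply: finsupp_ext => v; rewrite finsupp_sumE.
rewrite (eq_bigr (fun a => if a == v then m a else 0)) => [|a _]; last first.
  rewrite row_coactE le_refl andbT eq_sym; have [-> /= | //] := eqVneq a v.
  by case: ifP => // /negbT xNv; apply/esym/eqP; apply: contraNT xNv => /finsupp_dom/P_ge.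
rewrite big_pred1_seq ?undup_uniq //; case: ifP => // /negbT vNs.
by apply/eqP; apply: contraNT vNs; exact: ms'.
Qed.

Lemma row_comodule : is_right_comodule le row_coact.
Proof.
split=> [c m n a b | m a b | m | | m a b c d ab cd].
- apply: finsupp_ext => v; rewrite finsupp_linE !row_coactE.
  by case: ifP; rewrite ?mulr0 ?addr0.
- apply: contraNT => Nab; apply/eqP/finsupp_ext => v.
  by rewrite row_coactE (negbTE Nab) !andbF.
- have [s ms] := finsupp_support m; have [S HS] := interval_pairs s.
  exists S => a b; apply: contraNT => abNS; apply/eqP/finsupp_ext => v.
  rewrite row_coactE; case: and3P => [[_ xa ab] | //].
  apply/eqP; apply: contraNT abNS => /ms[_ bs]; exact: HS.
- exact: row_counit.
- apply: finsupp_ext => v; have [bc | bNc] := eqVneq b c; last first.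
    by rewrite !row_coactE (negbTE bNc); case: ifP.
  subst c; rewrite !row_coactE eqxx cd andbT; case: (v == a) => //=.
  by case xa: (le x a); rewrite //= ab (le_trans xa ab) (le_trans ab cd).
Qed.

End RowComodule.

Lemma exists_minimal (T : eqType) (le : rel T) (le_trans : transitive le) (s : seq T) :
  s != [::] -> exists2 c, c \in s & forall c', c' \in s -> le c' c -> le c c'.
Proof.
elim: s => [// | d s IHs] _; have [-> | sN0] := eqVneq s [::].
  by exists d => [|c']; rewrite ?mem_seq1 // => /eqP->.
have [c cs c_min] := IHs sN0.
have [/andP[dc _] | dNc] := boolP (le d c && ~~ le c d).
  exists d; first exact: mem_head.
  move=> c'; rewrite in_cons => /predU1P[-> // | c's c'd].
  exact: le_trans _ _ _ dc (c_min c' c's (le_trans _ _ _ c'd dc)).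
exists c; first by rewrite in_cons cs orbT.
move=> c'; rewrite in_cons => /predU1P[-> dc | /c_min//].
by apply: contraNT dNc => cNd; rewrite dc.
Qed.

Section Comodule.
Variables (k : fieldType) (X : eqType) (le : rel X).
Hypotheses (le_refl : reflexive le) (le_trans : transitive le).
Variables (M : lmodType k) (rho : M -> X -> X -> M).
Hypothesis rhoC : is_right_comodule le rho.

Lemma coact_linear a b : linear (fun m => rho m a b).
Proof. by case: rhoC => rho_lin *; move=> c m n; apply: rho_lin. Qed.

Lemma coact0 a b : rho 0 a b = 0.
Proof. exact: lin0 (coact_linear a b). Qed.

Lemma coactZ c m a b : rho (c *: m) a b = c *: rho m a b.
Proof. exact: (linZ (coact_linear a b) c m). Qed.

Lemma coact_le m a b : rho m a b != 0 -> le a b.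
Proof. by case: rhoC => _ rho_le _ _ _; exact: rho_le. Qed.

Lemma coact_nle m a b : ~~ le a b -> rho m a b = 0.
Proof. by move=> aNb; apply/eqP; apply: contraNT aNb; exact: coact_le. Qed.

Lemma coact_finite m : exists S : seq (X * X), forall a b, rho m a b != 0 -> (a, b) \in S.
Proof. by case: rhoC. Qed.

Lemma coact_counit m : exists s : seq X,
  [/\ uniq s, (forall a, rho m a a != 0 -> a \in s) & m = \sum_(a <- s) rho m a a].
Proof. by case: rhoC. Qed.

Lemma coact_coassoc m a b c d : le a b -> le c d ->
  rho (rho m c d) a b = if b == c then rho m a d else 0.
Proof. by case: rhoC => _ _ _ _ coassoc; exact: coassoc. Qed.

Lemma exists_socle_vector (m : M) : m != 0 -> exists x (s : M),
  [/\ s != 0, rho s x x = s & forall c, rho s c x != 0 -> le x c].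
Proof.
move=> m0; have [a maa] : exists a, rho m a a != 0.
  apply: contrapT => diag0; move: m0; have [s [_ _ ->]] := coact_counit m.
  by rewrite big1 ?eqxx // => a _; apply/eqP/negPn/negP => maa; apply: diag0; exists a.
have [S mS] := coact_finite m.
pose T := [seq c <- map fst S | rho m c a != 0].
have Ta : a \in T by rewrite mem_filter maa; apply: map_f (mS _ _ maa).
have [|c + c_min] := exists_minimal le_trans (T := X) (s := T).
  by apply: contraTneq Ta => ->.
rewrite mem_filter => /andP[mca _]; have ca := coact_le mca.
exists c, (rho m c a); split=> // [|c' mc'ca].
  by rewrite coact_coassoc ?le_refl ?eqxx.
have c'c := coact_le mc'ca; move: mc'ca; rewrite coact_coassoc // eqxx => mc'a.
apply: c_min c'c; rewrite mem_filter mc'a; exact: map_f (mS _ _ mc'a).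
Qed.

End Comodule.

Section Functional.
Local Open Scope classical_set_scope.
Variables (k : fieldType) (E : lmodType k) (s : E).
Hypothesis s_neq0 : s != 0.

Definition lin_closed (W : set E) := forall (c : k) u v, W u -> W v -> W (c *: u + v).

Definition avoids_s (W : set E) := lin_closed W /\ ~ W s.

Lemma exists_maximal_avoids_s :
  exists W, avoids_s W /\ forall B, W `<` B -> ~ avoids_s B.
Proof.
apply: Zorn_bigcup => F F_avoid F_chain; split=> [c u v [U FU Uu] [V FV Vv] | [U FU Us]].
  have [UV | VU] := F_chain _ _ FU FV.
    by exists V => //; apply: (F_avoid _ FV).1 => //; exact: UV.
  by exists U => //; apply: (F_avoid _ FU).1 => //; exact: VU.
exact: (F_avoid _ FU).2.
Qed.

Lemma exists_complement_of_line : exists W : set E,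
  [/\ lin_closed W, W 0, ~ W s & forall m, exists c : k, W (m - c *: s)].
Proof.
have [W [[W_lin Ws] W_max]] := exists_maximal_avoids_s.
(* [W 0] is not part of [avoids_s]: the empty chain has an empty union. *)
have W0 : W 0.
  apply: contrapT => W0; apply: (W_max (W `|` [set 0])).
    by split=> [w Ww | /(_ 0) sub]; [left | apply: W0; apply: sub; right].
  split=> [c u v [Wu|->] [Wv|->] | [//|s0]]; last by move: s_neq0; rewrite s0 eqxx.
  - by left; apply: W_lin.
  - by left; rewrite addr0 -[c *: u](subrK u) -[X in _ - X]scale1r -scalerBl; exact: W_lin.
  - by left; rewrite scaler0 add0r.
  - by right; rewrite scaler0 addr0.
exists W; split=> // m; have [Wm | Wm] := pselect (W m); first by exists 0; rewrite scale0r subr0.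
pose B w := exists u (d : k), W u /\ w = u + d *: m.
have WB : W `<` B.
  split=> [w Ww | /(_ m) Bm]; first by exists w, 0; rewrite scale0r addr0.
  by apply: Wm; apply: Bm; exists 0, 1; rewrite add0r scale1r.
have B_lin : lin_closed B.
  move=> c _ _ [u1 [d1 [Wu1 ->]]] [u2 [d2 [Wu2 ->]]].
  exists (c *: u1 + u2), (c * d1 + d2); split; first exact: W_lin.
  by rewrite scalerDr scalerA scalerDl addrACA.
have [u [d [Wu s_def]]] : B s by apply: contrapT => Bs; exact: W_max WB (conj B_lin Bs).
have d_neq0 : d != 0 by apply: contra_notN Ws => /eqP d0; rewrite s_def d0 scale0r addr0.
exists d^-1; have -> : m - d^-1 *: s = (- d^-1) *: u + 0.
  by rewrite s_def scalerDr scalerA mulVf // scale1r opprD addrC addrNK addr0 scaleNr.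
exact: W_lin.
Qed.

Lemma exists_functional : exists lam : E -> k^o, linear lam /\ lam s = 1.
Proof.
have [W [W_lin W0 Ws W_ex]] := exists_complement_of_line.
have W_scale c u : W u -> W (c *: u) by move=> Wu; rewrite -[_ *: u]addr0; exact: W_lin.
have coef_uniq m c c' : W (m - c *: s) -> W (m - c' *: s) -> c = c'.
  move=> Wc Wc'; apply/eqP; rewrite -subr_eq0; apply: contra_notT Ws => cc'.
  have := W_scale (c - c')^-1 _ (W_lin (-1) _ _ Wc Wc').
  by rewrite scaleN1r opprB addrA subrK -scalerBl scalerA mulVf // scale1r.
pose lam m := projT1 (cid (W_ex m)).
have lamP m : W (m - lam m *: s) by rewrite /lam; case: cid.
exists lam; split=> [c m n | ]; last first.
  by apply/esym/(coef_uniq s); [rewrite scale1r subrr | exact: lamP].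
apply: (coef_uniq (c *: m + n)); first exact: lamP.
have := W_lin c _ _ (lamP m) (lamP n).
by rewrite scalerDr scalerN scalerA addrACA -opprD -scalerDl.
Qed.

End Functional.

Lemma comod_morph_comp (k : fieldType) (X : eqType) (M N P : lmodType k)
    (rhoM : M -> X -> X -> M) (rhoN : N -> X -> X -> N) (rhoP : P -> X -> X -> P)
    (f : M -> N) (g : N -> P) :
  comod_morph rhoM rhoN f -> comod_morph rhoN rhoP g -> comod_morph rhoM rhoP (g \o f).
Proof.
by move=> [f_lin f_coact] [g_lin g_coact]; split=> [c m n | m a b] /=;
  rewrite ?f_lin ?g_lin ?f_coact ?g_coact.
Qed.

Lemma indecomposable_idempotent (k : fieldType) (X : eqType) (le : rel X)
    (M : lmodType k) (rho : M -> X -> X -> M) (p : M -> M) :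
  is_right_comodule le rho -> indecomposable_comodule rho -> comod_morph rho rho p ->
  (forall m, p (p m) = p m) -> (forall m, p m = 0) \/ (forall m, p m = m).
Proof.
move=> rhoC [_ indec] [p_lin p_coact] p_idem.
have N1 : subcomodule rho (fun m => p m = m).
  split=> [|c u v pu pv | u a b pu]; first exact: lin0 p_lin.
    by rewrite p_lin pu pv.
  by rewrite p_coact pu.
have N2 : subcomodule rho (fun m => p m = 0).
  split=> [|c u v pu pv | u a b pu]; first exact: lin0 p_lin.
    by rewrite p_lin pu pv scaler0 addr0.
  by rewrite p_coact pu (coact0 rhoC).
case: (indec _ _ N1 N2) => [m | m -> // | N1_0 | N2_0].
- exists (p m), (m - p m).
  by rewrite p_idem (linB p_lin) p_idem subrr addrC subrK.
- by left=> m; apply: N1_0; exact: p_idem.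
- right=> m; apply/eqP; rewrite -subr_eq0; apply/eqP/N2_0.
  by rewrite (linB p_lin) p_idem subrr.
Qed.

Section RowComodules.
Variables (k : fieldType) (X : eqType) (le : rel X) (x : X).
Hypotheses (le_refl : reflexive le) (le_trans : transitive le).
Hypothesis le_lf : locally_finite le.

Definition le_class : pred X := fun v => le x v && le v x.

Local Notation Ex := (finsupp k (le x)).
Local Notation Cx := (finsupp k le_class).

Lemma le_class_down a b : le_class b -> le x a -> le a b -> le_class a.
Proof. by case/andP=> _ bx xa ab; rewrite /le_class xa (le_trans ab bx). Qed.

Definition Ex_coact : Ex -> X -> X -> Ex := row_coact (fun _ _ _ xa _ => xa).
Definition Cx_coact : Cx -> X -> X -> Cx := row_coact le_class_down.

Lemma Ex_comodule : is_right_comodule le Ex_coact.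
Proof. exact: row_comodule. Qed.

Lemma Cx_comodule : is_right_comodule le Cx_coact.
Proof. by apply: row_comodule => // v /andP[]. Qed.

Lemma le_class_refl : le_class x. Proof. by rewrite /le_class le_refl. Qed.

Definition Ex_delta : Ex := finsupp_delta k (le_refl x).

Definition Cx_delta : Cx := finsupp_delta k le_class_refl.

Lemma Cx_incl_subproof (m : Cx) : finsupp_val m \in finsupp_pred (le x).
Proof.
rewrite inE; have [s ms] := finsupp_support m.
by exists s => v /ms[/andP[xv _] vs].
Qed.

Definition Cx_incl (m : Cx) : Ex := Finsupp (Cx_incl_subproof m).

Lemma Cx_incl_morph : comod_morph Cx_coact Ex_coact Cx_incl.
Proof. by split=> *; apply: finsupp_ext. Qed.

Lemma Cx_incl_inj : injective Cx_incl.
Proof. by move=> m n /(congr1 val) mn; apply: val_inj. Qed.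

Lemma Cx_incl_delta : Cx_incl Cx_delta = Ex_delta.
Proof. exact: finsupp_ext. Qed.

Lemma Ex_coact_base (m : Ex) v : Ex_coact m x v = (m v : k) *: Ex_delta.
Proof.
apply: finsupp_ext => w; rewrite row_coactE le_refl finsuppZE /=.
have [xv | xNv] := boolP (le x v).
  by rewrite andbT; case: (w == x); rewrite ?mulr1 ?mulr0.
have -> : m v = 0 by apply/eqP; apply: contraNT xNv => /finsupp_dom.
by rewrite andbF mul0r.
Qed.

Section CofreeMap.
Variables (E : lmodType k) (rho : E -> X -> X -> E).
Hypothesis rhoC : is_right_comodule le rho.
Variable lam : E -> k^o.
Hypothesis lam_lin : linear lam.

Definition cofree_mapf (m : E) : X -> k^o :=
  fun v => if le x v then lam (rho m x v) else 0.

Lemma cofree_map_subproof m : cofree_mapf m \in finsupp_pred (le x).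
Proof.
rewrite inE; have [S mS] := coact_finite rhoC m.
exists [seq p.2 | p <- S] => v; rewrite /cofree_mapf.
case: ifP => [xv lam_neq0 | _]; last by rewrite eqxx.
split=> //; apply/mapP; exists (x, v) => //; apply: mS.
by apply: contraNneq lam_neq0 => ->; rewrite (lin0 lam_lin).
Qed.

Definition cofree_map m : Ex := Finsupp (cofree_map_subproof m).

Lemma cofree_mapE m v : cofree_map m v = if le x v then lam (rho m x v) else 0.
Proof. by []. Qed.

Lemma cofree_map_morph : comod_morph rho Ex_coact cofree_map.
Proof.
split=> [c m n | m a b]; apply: finsupp_ext => v.
  rewrite finsupp_linE !cofree_mapE; case: ifP; rewrite ?mulr0 ?addr0 // => _.
  by rewrite (coact_linear rhoC) lam_lin.
rewrite row_coactE !cofree_mapE.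
have [ab | aNb] := boolP (le a b); last first.
  by rewrite (coact_nle rhoC _ aNb) (coact0 rhoC) (lin0 lam_lin) !andbF !if_same.
rewrite andbT; have [xv | xNv] := boolP (le x v); last first.
  by have [va | //] := eqVneq v a; rewrite -va (negbTE xNv).
rewrite (coact_coassoc rhoC) //; have [va | _] := eqVneq v a; last exact: lin0.
by rewrite -va in ab *; rewrite xv (le_trans xv ab).
Qed.

Lemma cofree_map_comp (h : Ex -> E) : comod_morph Ex_coact rho h ->
  forall m, cofree_map (h m) = (lam (h Ex_delta) : k) *: m.
Proof.
case=> h_lin h_coact m; apply: finsupp_ext => v; rewrite cofree_mapE finsuppZE.
have [xv | xNv] := boolP (le x v).
  by rewrite -h_coact Ex_coact_base (linZ h_lin) (linZ lam_lin) mulrC.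
have -> : m v = 0 by apply/eqP; apply: contraNT xNv => /finsupp_dom.
by rewrite mulr0.
Qed.

Lemma cofree_map_base s : rho s x x = s -> cofree_map s = (lam s : k) *: Ex_delta.
Proof.
move=> s_base; apply: finsupp_ext => v; rewrite cofree_mapE finsuppZE /=.
have [xv | xNv] := boolP (le x v); last first.
  have [vx | _] := eqVneq v x; last by rewrite mulr0.
  by rewrite vx le_refl in xNv.
rewrite -{1}s_base (coact_coassoc rhoC) ?le_refl //.
by have [_ | _] := eqVneq v x; rewrite ?s_base ?mulr1 ?mulr0 ?(lin0 lam_lin).
Qed.

End CofreeMap.

Section SocleMap.
Variables (E : lmodType k) (rho : E -> X -> X -> E).
Hypothesis rhoC : is_right_comodule le rho.
Variable s : E.
Hypotheses (s_base : rho s x x = s) (s_soc : forall c, rho s c x != 0 -> le x c).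
Variable L : seq X.
Hypotheses (L_uniq : uniq L) (L_supp : forall c, rho s c x != 0 -> c \in L).

Definition socle_map (m : Cx) : E := \sum_(c <- L) (m c : k) *: rho s c x.

Lemma socle_map_delta : socle_map Cx_delta = s.
Proof.
rewrite /socle_map (eq_bigr (fun c => if c == x then rho s c x else 0)) => [|c _].
  rewrite big_pred1_seq // s_base; case: ifP => // xNL.
  by apply/esym/eqP; apply: contraFT xNL; rewrite -{1}s_base => /L_supp.
by rewrite /= ; case: (c == x); rewrite ?scale1r ?scale0r.
Qed.

Lemma socle_map_coact (m : Cx) a b :
  rho (socle_map m) a b = socle_map (Cx_coact m a b).
Proof.
rewrite /socle_map (lin_sum (coact_linear rhoC a b)) /=.
pose V := (m b : k) *: rho s a x.
rewrite (eq_bigr (fun d => if d == b then (if le a b then V else 0) else 0)) => [|d _].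
  rewrite [RHS](eq_bigr (fun d => if d == a then (if le x a && le a b then V else 0) else 0)).
    rewrite !big_pred1_seq //; have [-> | VN0] := eqVneq V 0; first by rewrite !if_same.
    have /andP[mb sa] : (m b != 0) && (rho s a x != 0) by rewrite -negb_or -scaler_eq0.
    rewrite (L_supp sa) (s_soc sa) /=; have [ab | _] := boolP (le a b); last exact: if_same.
    have /andP[_ bx] := finsupp_dom mb.
    suff -> : b \in L by [].
    apply: L_supp; apply: contraNneq sa => sb0.
    by have := coact_coassoc rhoC s ab bx; rewrite eqxx sb0 (coact0 rhoC) => <-.
  move=> d _; rewrite /row_coactf; have [-> | _] := eqVneq d a; last by rewrite scale0r.
  by rewrite /=; case: ifP; rewrite ?scale0r.
rewrite (coactZ rhoC); have [-> | dNb] := eqVneq d b.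
  have [ab | aNb] := boolP (le a b); last by rewrite (coact_nle rhoC _ aNb) scaler0.
  have [m0 | mb] := eqVneq (m b : k) 0; first by rewrite /V m0 !scale0r.
  have /andP[_ bx] := finsupp_dom mb.
  by rewrite (coact_coassoc rhoC) ?eqxx.
have [-> | md] := eqVneq (m d : k) 0; first by rewrite scale0r.
have [ab | aNb] := boolP (le a b); last by rewrite (coact_nle rhoC _ aNb) scaler0.
have /andP[_ dx] := finsupp_dom md.
by rewrite (coact_coassoc rhoC) // eq_sym (negbTE dNb) scaler0.
Qed.

Lemma socle_map_morph : comod_morph Cx_coact rho socle_map.
Proof.
split=> [c m n | m a b]; last by rewrite socle_map_coact.
rewrite /socle_map scaler_sumr -big_split; apply: eq_bigr => d _.
by rewrite finsupp_linE scalerDl scalerA.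
Qed.

End SocleMap.

Lemma exists_socle_map (E : lmodType k) (rho : E -> X -> X -> E) (s : E) :
  is_right_comodule le rho -> rho s x x = s -> (forall c, rho s c x != 0 -> le x c) ->
  exists g : Cx -> E, comod_morph Cx_coact rho g /\ g Cx_delta = s.
Proof.
move=> rhoC s_base s_soc; have [S sS] := coact_finite rhoC s.
pose L := undup [seq p.1 | p <- S].
have L_supp c : rho s c x != 0 -> c \in L.
  by move=> /sS csS; rewrite mem_undup; apply/mapP; exists (c, x).
have L_uniq : uniq L := undup_uniq _.
exists (socle_map rho s L); split.
  exact: (socle_map_morph (rho := rho) rhoC s_soc L_uniq L_supp).
exact: (socle_map_delta (rho := rho) s_base L_uniq L_supp).
Qed.

Lemma iso_to_Ex_of_inverse (E : lmodType k) (rho : E -> X -> X -> E)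
    (r : E -> Ex) (h : Ex -> E) :
  comod_morph rho Ex_coact r -> cancel r h -> cancel h r -> iso_to_Ex le rho x.
Proof.
move=> [r_lin r_coact] rK hK.
exists (fun m u v => if u == x then r m v else 0); split.
- move=> c m n u v; case: (u == x); last by rewrite mulr0 addr0.
  by rewrite r_lin finsupp_linE.
- move=> m n mn; rewrite -[m]rK -[n]rK; congr h; apply: finsupp_ext => v.
  by have := congr1 (fun f => f x v) mn; rewrite /= eqxx.
- move=> m; have [S rS] := finsupp_support (r m); exists S => u v.
  by have [_ /rS[-> ->] // | _] := eqVneq u x; rewrite eqxx.
- move=> f [S fS].
  have fx_finsupp : f x \in finsupp_pred (le x).
    by rewrite inE; exists S => v /fS /and3P[_ xv vS].
  exists (h (Finsupp fx_finsupp)); apply/funext => u; apply/funext => v; rewrite hK /=.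
  have [-> // | uNx] := eqVneq u x.
  by apply/esym/eqP; apply: contraNT uNx => /fS /and3P[ux _ _].
- move=> m a b; apply/funext => u; apply/funext => v.
  rewrite /coaction_C r_coact /Ex_coact row_coactE.
  by have [-> | _] := eqVneq u x; rewrite ?if_same.
Qed.

Section Injective.
Variables (E : lmodType k) (rho : E -> X -> X -> E).
Hypotheses (rhoC : is_right_comodule le rho) (E_inj : injective_comodule le rho)
  (E_indec : indecomposable_comodule rho).
Variable s : E.
Hypotheses (s_neq0 : s != 0) (s_base : rho s x x = s)
  (s_soc : forall c, rho s c x != 0 -> le x c).

Lemma injective_indecomposable_iso_Ex : iso_to_Ex le rho x.
Proof.
have [lam [lam_lin lam_s]] := exists_functional s_neq0.
have [g [g_morph g_delta]] := exists_socle_map rhoC s_base s_soc.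
have [h [h_morph h_ext]] :=
  E_inj Cx_comodule Ex_comodule Cx_incl_morph Cx_incl_inj g_morph.
have h_delta : h Ex_delta = s by rewrite -Cx_incl_delta h_ext.
pose r := cofree_map rhoC lam_lin.
have rK : cancel h r.
  by move=> n; rewrite /r (cofree_map_comp rhoC lam_lin h_morph) h_delta lam_s scale1r.
have r_morph : comod_morph rho Ex_coact r := cofree_map_morph rhoC lam_lin.
have hr_idem m : h (r (h (r m))) = h (r m) by rewrite rK.
have [hr0 | hrK] :=
  indecomposable_idempotent rhoC E_indec (comod_morph_comp r_morph h_morph) hr_idem.
  have := hr0 s; rewrite /= /r (cofree_map_base rhoC lam_lin s_base) lam_s scale1r h_delta.
  by move/eqP; rewrite (negbTE s_neq0).
exact: iso_to_Ex_of_inverse r_morph hrK rK.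
Qed.

End Injective.

End RowComodules.

Theorem mainTheorem7 (k : fieldType) (X : eqType) (le : rel X) :
  preorder_rel le -> locally_finite le ->
  forall (E : lmodType k) (rho : E -> X -> X -> E),
    is_right_comodule le rho -> injective_comodule le rho ->
    indecomposable_comodule rho ->
    exists x : X, iso_to_Ex le rho x.
Proof.
move=> [le_refl le_trans] le_lf E rho rhoC E_inj E_indec.
have [[m m_neq0] _] := E_indec.
have [x [s [s_neq0 s_base s_soc]]] := exists_socle_vector le_refl le_trans rhoC m_neq0.
exists x; exact: (injective_indecomposable_iso_Ex le_refl le_trans le_lf
  rhoC E_inj E_indec s_neq0 s_base s_soc).
Qed.
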